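(* Let $\varphi$ be an individually rational rule that is resource monotonic, strategy-proof and satisfies monotonic discoverability, and let $\mathbb{S}$ be the canonical pick-an-object mechanism that sequentializes $\varphi$. Then agents following straightforward strategies constitute the unique perfect ex-post equilibrium of the game induced by $\mathbb{S}$.
   Context: Let $A=\{a_1,\dots,a_n\}$ be a finite set of agents and $O=\{o_1,\dots,o_m\}\cup\{\emptyset\}$ a finite set of object types ($\emptyset$ the null object). Each agent $a$ has a strict preference $P_a$ over $O$ with weak version $R_a$; $\mathbb{P}$ is the set of strict preferences, $\mathcal{P}=\mathbb{P}^n$ the set of profiles; $P_{-a}$ denotes the others' preferences. An allocation is a function $\mu:A\to O$; a rule is $\varphi:\mathcal{P}\to\{\text{allocations}\}$, $\varphi_a(P)=\varphi(P)(a)$. Individually rational: $\varphi_a(P)R_a\emptyset$ always. Strategy-proof: $\varphi_a(P_a,P_{-a})R_a\varphi_a(P'_a,P_{-a})$ for all $a,P,P'_a$. Resource monotonic: for every agent $a^*$, profile $P$ and $P'_{a^*}$ with $\varphi_{a^*}(P'_{a^*},P_{-a^*})=\emptyset$, every $a\neq a^*$ has $\varphi_a(P'_{a^*},P_{-a^*})\,R_a\,\varphi_a(P)$. Monotonic discoverability: for $P$ and allocation $\mu$, $\mathcal{L}(P,\mu)$ is the set of profiles $P'$ such that for every $a$, $P'_a$ agrees with $P_a$ on $\mu(a)$ and on all objects $P_a$ ranks above $\mu(a)$ (same set above $\mu(a)$, same order). $\varphi$ satisfies monotonic discoverability if for every $\mu$ and $P$, either $\varphi(P)=\mu$ or some agent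 $a^*$ has $\varphi_{a^*}(P')\neq\mu(a^* )$ for all $P'\in\mathcal{L}(P,\mu)$. PAO mechanisms: a choice history is a finite (possibly empty) sequence $((\Omega_1,\omega_1),\dots,(\Omega_k,\omega_k))$, $\Omega_j\subseteq O$, $\omega_j\in\Omega_j$, with last choice $\omega_k$; $P_a$ is consistent with it if $\omega_jR_ao$ for all $j$ and $o\in\Omega_j$. A collective history $h^A=(h_1,\dots,h_n)$ is an $n$-tuple of choice histories ($h^{A-\emptyset}$: all empty); a profile $P$ is consistent with $h^A$ if each $P_{a_i}$ is consistent with $h_i$, and $P(h^A)$ is the set of such profiles. Define $\varphi(h^A)=\{\varphi(P):P\in P(h^A)\}$ and $\mu_i^\varphi(h^A)=\{\mu(a_i):\mu\in\varphi(h^A)\}$. A menu function $\mathbb{S}$ maps collective histories to $n$-tuples of subsets of $O$, with non-empty initial menus and, afterwards, agent $i$'s menu a subset of her last menu minus her last choice. The PAO mechanism $\mathbb{S}$: in period 1 every agent chooses from her initial menu; in each later period, given current $h^A$, if all menus in $\mathbb{S}(h^A)$ are empty the procedure stops and each agent receives her last choice; otherwise agents with non-empty menus choose an element; (menu, choice) is appended to each chooser's history. Straightforward strategy w.r.t. $P_a$: always choose the $P_a$-best element of the menu. $\mathbb{S}$ sequentializes $\varphi$ if straightforward play w.r.t. any $P$ yields $\varphi(P)$. The canonical PAO mechanism for $\varphi$ is given by: agent $i$'s menu $\mathbb{S}^i(h^A)$ is $\emptyset$ if $|\varphi(h^A)|=1$ or if agent $i$'s last choice in $h^A$ belongs to $\mu_i^\varphi(h^A)$,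 and is $\mu_i^\varphi(h^A)$ otherwise. Strategies and equilibrium: $H^A_{\mathbb{S}}$ is the set of collective histories that can arise, $H^A_{\mathbb{S}}(a)$ the set of agent $a$'s histories within them. A strategy for $a$ maps each pair (own history in $H^A_{\mathbb{S}}(a)\cup\{\emptyset\}$, menu $\Omega$) to an element of $\Omega$; a type-strategy maps preferences to strategies. $\mathcal{O}_a|_{h^A}(\sigma)$ is $a$'s assignment when $\mathbb{S}$ is run from $h^A$ with strategy profile $\sigma$. A type-strategy profile $(\Sigma_a)$ is a perfect ex-post equilibrium if for all $a$, all $h^A\in H^A_{\mathbb{S}}\cup\{h^{A-\emptyset}\}$, all strategies $\sigma'_a$ and all $P\in\mathcal{P}$: $\mathcal{O}_a|_{h^A}(\Sigma_a(P_a),(\Sigma_{a'}(P_{a'}))_{a'\neq a})\,R_a\,\mathcal{O}_a|_{h^A}(\sigma'_a,(\Sigma_{a'}(P_{a'}))_{a'\neq a})$. *)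

From mathcomp Require Import all_boot fingroup perm.
Set Implicit Arguments. Unset Strict Implicit. Unset Printing Implicit Defensive.

Section PAO.
Variables (n m : nat).

(* Objects: o_1..o_m are [Some i], the null object is [None]. *)
Definition obj := option 'I_m.
Definition null : obj := None.

(* A strict preference = a strict linear order on obj, encoded by a
   bijection obj -> ranks; smaller rank = better. *)
Definition pref := {perm obj}.
Definition rank (Pa : pref) (o : obj) : nat := enum_rank (Pa o).
Definition sprefers (Pa : pref) (o o' : obj) : bool := rank Pa o < rank Pa o'.
Definition wprefers (Pa : pref) (o o' : obj) : bool := rank Pa o <= rank Pa o'.

Definition profile := {ffun 'I_n -> pref}.
Definition alloc := {ffun 'I_n -> obj}.
Definition rule := profile -> alloc.

Definition upd (P : profile) (a : 'I_n) (Pa : pref) : profile :=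
  [ffun b => if b == a then Pa else P b].

Definition individually_rational (phi : rule) : Prop :=
  forall (P : profile) (a : 'I_n), wprefers (P a) (phi P a) null.

Definition strategy_proof (phi : rule) : Prop :=
  forall (P : profile) (a : 'I_n) (Pa' : pref), wprefers (P a) (phi P a) (phi (upd P a Pa') a).

Definition resource_monotonic (phi : rule) : Prop :=
  forall (astar : 'I_n) (P : profile) (Pa' : pref),
    phi (upd P astar Pa') astar = null ->
    forall a : 'I_n, a != astar -> wprefers (P a) (phi (upd P astar Pa') a) (phi P a).

Definition upper (Pa : pref) (x : obj) : {set obj} := [set o | wprefers Pa o x].

Definition in_L (P : profile) (mu : alloc) (P' : profile) : Prop :=
  forall a : 'I_n, upper (P' a) (mu a) = upper (P a) (mu a) /\
    {in upper (P a) (mu a) &, forall o o', wprefers (P' a) o o' = wprefers (P a) o o'}.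

Definition monotonic_discoverability (phi : rule) : Prop :=
  forall (mu : alloc) (P : profile),
    phi P = mu \/ exists astar : 'I_n, forall P' : profile, in_L P mu P' -> phi P' astar != mu astar.

Definition chist := seq ({set obj} * obj).
Definition colhist := {ffun 'I_n -> chist}.
Definition hempty : colhist := [ffun => [::]].

Definition last_choice (h : chist) : option obj := omap snd (ohead (rev h)).

Definition consistent (Pa : pref) (h : chist) : bool :=
  all (fun p : {set obj} * obj => [forall o in p.1, wprefers Pa p.2 o]) h.
Definition consistentP (P : profile) (hA : colhist) : bool :=
  [forall i, consistent (P i) (hA i)].

Definition phiH (phi : rule) (hA : colhist) : {set alloc} :=
  phi @: [set P | consistentP P hA].
Definition muH (phi : rule) (hA : colhist) (i : 'I_n) : {set obj} :=
  (fun mu : alloc => mu i) @: phiH phi hA.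

Definition menu_fun := colhist -> 'I_n -> {set obj}.

Definition canonical_menu (phi : rule) : menu_fun := fun hA i =>
  if (#|phiH phi hA| == 1)
     || (if last_choice (hA i) is Some o then o \in muH phi hA i else false)
  then set0 else muH phi hA i.

Definition strategy := chist -> {set obj} -> obj.
Definition valid_strategy (s : strategy) : Prop :=
  forall (h : chist) (Om : {set obj}), Om != set0 -> s h Om \in Om.

Definition stopped (S : menu_fun) (hA : colhist) : bool := [forall i, S hA i == set0].

Definition step_choice (S : menu_fun) (c : 'I_n -> obj) (hA : colhist) : colhist :=
  [ffun i => if S hA i == set0 then hA i else rcons (hA i) (S hA i, c i)].

Definition step (S : menu_fun) (sigma : 'I_n -> strategy) (hA : colhist) : colhist :=
  step_choice S (fun i => sigma i (hA i) (S hA i)) hA.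

(* Running from hA: a stopped history is a fixed point of [step]; with PAO menus
   (each choice strictly shrinks the chooser's menu) the procedure stops within
   n * #|obj| periods, so (n * #|obj|).+1 iterations reach the final history. *)
Definition run (S : menu_fun) (sigma : 'I_n -> strategy) (hA : colhist) : colhist :=
  iter (n * #|{: obj}|).+1 (step S sigma) hA.

Definition outcome (S : menu_fun) (sigma : 'I_n -> strategy) (hA : colhist) (a : 'I_n) : obj :=
  odflt null (last_choice (run S sigma hA a)).

Inductive reachable (S : menu_fun) : colhist -> Prop :=
| reach0 : reachable S hempty
| reachS (hA : colhist) (c : 'I_n -> obj) :
    reachable S hA -> ~~ stopped S hA ->
    (forall i : 'I_n, S hA i != set0 -> c i \in S hA i) ->
    reachable S (step_choice S c hA).

Definition straightforward (Pa : pref) : strategy := fun _ Om =>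
  odflt null [pick o in Om | [forall o' in Om, wprefers Pa o o']].

Definition sequentializes (S : menu_fun) (phi : rule) : Prop :=
  forall P : profile, [ffun a => outcome S (fun i => straightforward (P i)) hempty a] = phi P.

Definition type_strategy := 'I_n -> pref -> strategy.

Definition perfect_expost_eq (S : menu_fun) (Sig : type_strategy) : Prop :=
  forall (a : 'I_n) (hA : colhist), reachable S hA ->
  forall s' : strategy, valid_strategy s' ->
  forall P : profile,
    let sig := fun b => Sig b (P b) in
    wprefers (P a) (outcome S sig hA a)
                   (outcome S (fun b => if b == a then s' else sig b) hA a).

End PAO.

From mathcomp Require Import all_boot fingroup perm.
Set Implicit Arguments. Unset Strict Implicit. Unset Printing Implicit Defensive.

(* From a reachable history, the continuation of the canonical mechanism ends, under
   straightforward play, in phi applied to any profile consistent with the final history;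
   letting each agent rank her past choices first yields such a profile.  A deviation
   therefore only changes the deviator's own report, so strategy-proofness makes
   straightforward play an equilibrium.

   Uniqueness goes by backward induction over reachable histories, assuming
   straightforward play afterwards.  Against opponents reporting "null first", an agent's
   current pick is exactly what phi grants her: individual rationality puts null in every
   menu, and when the opponents are switched one by one to their final reports,
   resource monotonicity (an opponent gets null) or monotonic discoverability (she keeps
   her last choice) preserves that agent's assignment.  In particular a "null first"
   agent must pick null, and the equilibrium condition then forces every agent to pick
   her best object from the menu. *)

Section Preferences.
Variable m : nat.
Local Notation obj := (obj m).
Local Notation pref := (pref m).

Lemma rank_inj (Pa : pref) : injective (rank Pa).
Proof. by move=> o o' /val_inj/enum_rank_inj/perm_inj. Qed.

Lemma wprefers_refl (Pa : pref) o : wprefers Pa o o.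
Proof. exact: leqnn. Qed.

Lemma wprefers_anti (Pa : pref) o o' :
  wprefers Pa o o' -> wprefers Pa o' o -> o = o'.
Proof.
rewrite /wprefers => le1 le2; apply: (@rank_inj Pa).
by apply/eqP; rewrite eqn_leq le1 le2.
Qed.

Section PrefOfKey.
Variable key : obj -> nat.
Hypothesis key_inj : injective key.

Definition key_rank (o : obj) : nat := #|[set o' | key o' < key o]|.

Lemma key_rank_lt o : key_rank o < #|{: obj}|.
Proof.
apply: (@leq_trans #|o |: [set o' | key o' < key o]|); last exact: max_card.
by rewrite cardsU1 inE ltnn.
Qed.

Lemma key_rank_mono o o' : key o < key o' -> key_rank o < key_rank o'.
Proof.
move=> lt_oo'; apply: proper_card; apply/properP; split.
  by apply/subsetP=> x; rewrite !inE => /ltn_trans; apply.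
by exists o; rewrite !inE ?ltnn.
Qed.

Lemma leq_key_rank o o' : (key_rank o <= key_rank o') = (key o <= key o').
Proof.
case: (ltngtP (key o) (key o')) => [lt_oo'|lt_o'o|/key_inj->]; last by rewrite !leqnn.
  by rewrite ltnW // key_rank_mono.
by apply/negbTE; rewrite -ltnNge key_rank_mono.
Qed.

Definition key_fun (o : obj) : obj := enum_val (Ordinal (key_rank_lt o)).

Lemma key_fun_inj : injective key_fun.
Proof.
move=> o o' /enum_val_inj [] /eqP; rewrite eqn_leq !leq_key_rank -eqn_leq.
by move/eqP/key_inj.
Qed.

Definition pref_of_key : pref := perm key_fun_inj.

Lemma pref_of_keyE o o' : wprefers pref_of_key o o' = (key o <= key o').
Proof. by rewrite /wprefers /rank !permE /key_fun !enum_valK /= leq_key_rank. Qed.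

End PrefOfKey.

Definition null_key (o : obj) : nat := if o is Some i then i.+1 else 0.

Lemma null_key_inj : injective null_key.
Proof. by case=> [i|] [j|] //= [] /val_inj ->. Qed.

Definition null_first : pref := pref_of_key null_key_inj.

Lemma null_first_acceptable o : wprefers null_first o (null m) = (o == null m).
Proof. by rewrite pref_of_keyE; case: o. Qed.

Lemma null_first_top o : wprefers null_first (null m) o.
Proof. by rewrite pref_of_keyE. Qed.

Lemma straightforwardP (Pa : pref) h (Om : {set obj}) : Om != set0 ->
  straightforward Pa h Om \in Om /\
  forall o, o \in Om -> wprefers Pa (straightforward Pa h Om) o.
Proof.
case/set0Pn=> o0 o0_in; rewrite /straightforward.
case: pickP => [x /andP[x_in /forall_inP x_best]|no_best] //=.
case: (arg_minnP (rank Pa) o0_in) => x x_in x_min.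
have /negP[] := no_best x; rewrite /= (x_in : x \in Om) /=.
by apply/forall_inP=> o /x_min.
Qed.

Lemma straightforward_best (Pa : pref) h (Om : {set obj}) x :
  x \in Om -> (forall o, o \in Om -> wprefers Pa x o) -> straightforward Pa h Om = x.
Proof.
move=> x_in x_best; have Om_n0 : Om != set0 by apply/set0Pn; exists x.
have [s_in s_best] := straightforwardP Pa h Om_n0.
by apply: (wprefers_anti (s_best x x_in)); apply: x_best.
Qed.

Lemma straightforward_valid (Pa : pref) : valid_strategy (straightforward Pa).
Proof. by move=> h Om /(straightforwardP Pa h) []. Qed.

End Preferences.

Section ChoiceSequences.
Variable m : nat.
Local Notation obj := (obj m).
Local Notation pref := (pref m).
Local Notation chist := (chist m).

Definition choices (h : chist) : seq obj := map snd h.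

Definition last_chosen (h : chist) : obj := last (null m) (choices h).

Lemma choices_rcons h e : choices (rcons h e) = rcons (choices h) e.2.
Proof. exact: map_rcons. Qed.

Lemma consistent_rcons (Pa : pref) h e :
  consistent Pa (rcons h e) = [forall o in e.1, wprefers Pa e.2 o] && consistent Pa h.
Proof. by rewrite /consistent all_rcons. Qed.

Fixpoint fresh_from (prev : seq obj) (h : chist) : Prop :=
  if h is (Om, w) :: t then
    [/\ w \in Om, {in prev, forall o, o \notin Om} & fresh_from (rcons prev w) t]
  else True.

Definition wf_hist (h : chist) : Prop := fresh_from [::] h.

Lemma fresh_from_rcons prev h Om w :
  fresh_from prev (rcons h (Om, w)) <->
  [/\ fresh_from prev h, w \in Om & {in prev ++ choices h, forall o, o \notin Om}].
Proof.
elim: h prev => [|[Om' w'] t IH] prev /=.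
  by rewrite cats0; split=> [[]|[]].
split=> [[w'_in fresh_w' /IH[fresh_t w_in fresh_w]]|[[w'_in fresh_w' fresh_t] w_in fresh_w]].
  by split=> // o; rewrite -cat_rcons; apply: fresh_w.
by split=> //; apply/IH; split=> // o; rewrite cat_rcons; apply: fresh_w.
Qed.

Lemma wf_hist_rcons h Om w :
  wf_hist (rcons h (Om, w)) <->
  [/\ wf_hist h, w \in Om & {in choices h, forall o, o \notin Om}].
Proof. exact: fresh_from_rcons. Qed.

Lemma fresh_from_uniq prev h : fresh_from prev h -> uniq prev -> uniq (prev ++ choices h).
Proof.
elim: h prev => [|[Om w] t IH] prev /=; first by rewrite cats0.
case=> w_in fresh_w fresh_t uniq_prev; rewrite -cat_rcons; apply: IH => //.
by rewrite rcons_uniq uniq_prev andbT; apply/negP=> /fresh_w; rewrite w_in.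
Qed.

Lemma wf_hist_uniq h : wf_hist h -> uniq (choices h).
Proof. by move/fresh_from_uniq; apply. Qed.

Lemma wf_hist_size h : wf_hist h -> size h <= #|{: obj}|.
Proof. by move/wf_hist_uniq/card_uniqP; rewrite size_map => <-; apply: max_card. Qed.

Definition first_key (c : seq obj) (P : pref) (o : obj) : nat :=
  if o \in c then index o c else size c + rank P o.

Lemma first_key_inj c P : injective (first_key c P).
Proof.
move=> o o'; rewrite /first_key.
case o_in: (o \in c); case o'_in: (o' \in c) => eq_key.
- by rewrite -(nth_index o o_in) eq_key nth_index.
- by move: (index_mem o c); rewrite o_in eq_key ltnNge leq_addr.
- by move: (index_mem o' c); rewrite o'_in -eq_key ltnNge leq_addr.
- by apply: (@rank_inj _ P); apply/eqP; rewrite -(eqn_add2l (size c)) eq_key.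
Qed.

Definition agree_outside (c : seq obj) (Q P : pref) : Prop :=
  forall o o', o \notin c -> o' \notin c -> wprefers Q o o' = wprefers P o o'.

(* The past choices of [h] first, in the order they were made, then [P]. *)
Definition choices_first (P : pref) (h : chist) : pref :=
  pref_of_key (@first_key_inj (choices h) P).

Section ChoicesFirst.
Variables (P : pref) (h : chist).
Local Notation Q := (choices_first P h).

Lemma choices_firstE o o' :
  wprefers Q o o' = (first_key (choices h) P o <= first_key (choices h) P o').
Proof. exact: pref_of_keyE. Qed.

Lemma choices_first_out o o' : o \notin choices h -> o' \notin choices h ->
  wprefers Q o o' = wprefers P o o'.
Proof.
by move=> /negbTE o_out /negbTE o'_out; rewrite choices_firstE /first_key o_out o'_out leq_add2l.
Qed.

Lemma choices_first_agree : agree_outside (choices h) Q P.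
Proof. exact: choices_first_out. Qed.

Lemma choices_first_in_out o o' : o \in choices h -> o' \notin choices h -> wprefers Q o o'.
Proof.
move=> o_in /negbTE o'_out; rewrite choices_firstE /first_key o_in o'_out.
by rewrite (leq_trans _ (leq_addr _ _)) // ltnW // index_mem.
Qed.

Lemma choices_first_out_in o o' : o \notin choices h -> o' \in choices h -> ~~ wprefers Q o o'.
Proof.
move=> /negbTE o_out o'_in; rewrite choices_firstE /first_key o_out o'_in -ltnNge.
by rewrite (leq_trans _ (leq_addr _ _)) // index_mem.
Qed.

Lemma choices_first_in o o' : o \in choices h -> o' \in choices h ->
  wprefers Q o o' = (index o (choices h) <= index o' (choices h)).
Proof. by move=> o_in o'_in; rewrite choices_firstE /first_key o_in o'_in. Qed.

End ChoicesFirst.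

Lemma choices_first_null_acceptable h o :
  wprefers (choices_first (null_first m) h) o (null m) -> o \in choices h \/ o = null m.
Proof.
case: (boolP (o \in choices h)) => [|o_out]; first by left.
case: (boolP (null m \in choices h)) => [null_in|null_out].
  by rewrite (negbTE (choices_first_out_in _ o_out null_in)).
by rewrite choices_first_out // null_first_acceptable => /eqP; right.
Qed.

Lemma fresh_from_first_key prev h P : fresh_from prev h ->
  forall e, e \in h -> forall o, o \in e.1 ->
  first_key (prev ++ choices h) P e.2 <= first_key (prev ++ choices h) P o.
Proof.
elim: h prev => [|[Om w] t IH] prev //= [w_in fresh_w fresh_t] e.
rewrite in_cons => /orP[/eqP-> o o_in|e_in]; last by rewrite -cat_rcons; apply: IH.
have w_out : w \notin prev by apply/negP=> /fresh_w; rewrite w_in.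
have o_out : o \notin prev by apply/negP=> /fresh_w; rewrite o_in.
rewrite /first_key !mem_cat in_cons eqxx orbT /= !index_cat (negbTE w_out) (negbTE o_out) /=.
rewrite eqxx addn0; case: ifP => _; first by rewrite leq_addr.
by rewrite size_cat -addnA leq_addr.
Qed.

Lemma choices_first_consistent P h : wf_hist h -> consistent (choices_first P h) h.
Proof.
move=> wf_h; apply/allP=> e e_in; apply/forall_inP=> o o_in.
by rewrite choices_firstE; apply: (fresh_from_first_key P wf_h).
Qed.

Definition choices_on_top (Q : pref) (g : chist) : Prop :=
  (forall o, wprefers Q o (last_chosen g) = (o \in choices g)) /\
  {in choices g &, forall o o', wprefers Q o o' = (index o (choices g) <= index o' (choices g))}.

Lemma choices_first_on_top P g : wf_hist g -> g != [::] -> choices_on_top (choices_first P g) g.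
Proof.
move=> wf_g g_nil; split=> [o|]; last exact: choices_first_in.
have c_nil : choices g != [::] by rewrite -size_eq0 size_map size_eq0.
rewrite choices_firstE /first_key /last_chosen.
move: (choices g) (wf_hist_uniq wf_g) c_nil => c; case/lastP: c => [//|c x].
rewrite last_rcons rcons_uniq => /andP[x_out _] _.
have -> : index x (rcons c x) = size c by rewrite -cats1 index_cat (negbTE x_out) /= eqxx addn0.
rewrite [x \in _]mem_rcons mem_head; case: ifP => [o_in|_].
  by rewrite -ltnS -(size_rcons c x) index_mem o_in.
by apply/negbTE; rewrite -ltnNge size_rcons ltnS leq_addr.
Qed.

End ChoiceSequences.

Section CanonicalMechanism.
Variables (n m : nat) (phi : rule n m).
Local Notation obj := (obj m).
Local Notation pref := (pref m).
Local Notation chist := (chist m).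
Local Notation colhist := (colhist n m).
Local Notation profile := (profile n m).
Local Notation S := (canonical_menu phi).

Lemma last_choiceE (h : chist) :
  last_choice h = if h is [::] then None else Some (last_chosen h).
Proof.
case/lastP: h => [|h e] //.
by rewrite /last_choice rev_rcons /last_chosen choices_rcons last_rcons; case: h.
Qed.

Lemma nonempty_menuE (h : colhist) i : S h i != set0 ->
  [/\ S h i = muH phi h i, #|phiH phi h| != 1 &
      h i != [::] -> last_chosen (h i) \notin muH phi h i].
Proof.
rewrite /canonical_menu; case: ifP; rewrite ?eqxx // => /negbT.
rewrite negb_or last_choiceE => /andP[phiH_n1 last_out] _; split=> //.
by move: last_out; case: (h i).
Qed.

Lemma step_choiceE (c : 'I_n -> obj) (h : colhist) i :
  step_choice S c h i = if S h i == set0 then h i else rcons (h i) (S h i, c i).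
Proof. by rewrite ffunE. Qed.

Lemma consistentP_step (P : profile) c h :
  consistentP P (step_choice S c h) -> consistentP P h.
Proof.
move/forallP=> P_cons; apply/forallP=> i; move: (P_cons i); rewrite step_choiceE.
by case: ifP => // _; rewrite consistent_rcons => /andP[].
Qed.

Lemma phi_in_muH (P : profile) h i : consistentP P h -> phi P i \in muH phi h i.
Proof.
by move=> P_cons; apply/imsetP; exists (phi P) => //; apply/imsetP; exists P; rewrite ?inE.
Qed.

Lemma muH_witness h i o :
  o \in muH phi h i -> exists2 P : profile, consistentP P h & phi P i = o.
Proof. by case/imsetP=> mu /imsetP[P]; rewrite inE => P_cons -> ->; exists P. Qed.

Lemma muH_step c h i : muH phi (step_choice S c h) i \subset muH phi h i.
Proof.
apply/subsetP=> _ /muH_witness[P /consistentP_step P_cons <-].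
exact: phi_in_muH.
Qed.

Definition hist_inv (h : colhist) : Prop := forall i,
  wf_hist (h i) /\ (h i != [::] -> muH phi h i \subset (last (set0, null m) (h i)).1).

Section Invariant.
Variable h : colhist.
Hypothesis inv_h : hist_inv h.

Lemma muH_chosen i o : o \in muH phi h i -> o \in choices (h i) -> o = last_chosen (h i).
Proof.
case: (inv_h i); case/lastP: (h i) => [//|g [Om x]] /wf_hist_rcons[_ _ fresh_Om] muH_sub o_in.
rewrite choices_rcons mem_rcons in_cons => /orP[/eqP->|o_chosen].
  by rewrite /last_chosen choices_rcons last_rcons.
have g_nil : rcons g (Om, x) != [::] by rewrite -size_eq0 size_rcons.
have : o \in Om by move/subsetP: (muH_sub g_nil); rewrite last_rcons; apply.
by rewrite (negbTE (fresh_Om o o_chosen)).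
Qed.

Lemma menu_not_chosen i o : o \in S h i -> o \notin choices (h i).
Proof.
move=> o_in; have [S_muH _ last_out] := nonempty_menuE (introT (set0Pn _) (ex_intro _ o o_in)).
apply/negP=> o_chosen; rewrite S_muH in o_in.
have h_nil : h i != [::] by case: (h i) o_chosen.
by move: (last_out h_nil); rewrite -(muH_chosen o_in o_chosen) o_in.
Qed.

Lemma hist_inv_step c : (forall i, S h i != set0 -> c i \in S h i) ->
  hist_inv (step_choice S c h).
Proof.
move=> c_in i; case: (inv_h i) => wf_hi muH_sub; rewrite step_choiceE.
case: ifP => [_|/negbT menu_i].
  by split=> // /muH_sub; apply: subset_trans (muH_step _ _ _).
split=> [|_]; last by rewrite last_rcons; case: (nonempty_menuE menu_i) => -> _ _; apply: muH_step.
by apply/wf_hist_rcons; split=> [||o]; [|exact: c_in|apply: contraL => /menu_not_chosen].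
Qed.

End Invariant.

Lemma reachable_inv h : reachable S h -> hist_inv h.
Proof. by elim=> [i|h' c _ inv_h' _ c_in]; [rewrite ffunE | exact: hist_inv_step]. Qed.

Lemma step_choice_stopped h c : stopped S h -> step_choice S c h = h.
Proof. by move/forallP=> idle; apply/ffunP=> i; rewrite step_choiceE (idle i). Qed.

Definition valid_strategies (sig : 'I_n -> strategy m) : Prop :=
  forall i, valid_strategy (sig i).

Lemma stepE (sig : 'I_n -> strategy m) h i :
  step S sig h i = if S h i == set0 then h i else rcons (h i) (S h i, sig i (h i) (S h i)).
Proof. exact: step_choiceE. Qed.

Section Strategies.
Variable sig : 'I_n -> strategy m.
Hypothesis sig_valid : valid_strategies sig.

Lemma reachable_step h : reachable S h -> reachable S (step S sig h).
Proof.
move=> reach_h; case: (boolP (stopped S h)) => [stopped_h|active].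
  by rewrite /step step_choice_stopped.
by apply: reachS => // i /sig_valid; apply.
Qed.

Lemma reachable_iter k h : reachable S h -> reachable S (iter k (step S sig) h).
Proof. by move=> reach_h; elim: k => //= k; apply: reachable_step. Qed.

End Strategies.

Definition hist_size (h : colhist) : nat := \sum_(i < n) size (h i).

Lemma hist_size_le h : hist_inv h -> hist_size h <= n * #|{: obj}|.
Proof.
move=> inv_h; rewrite -[n in n * _]card_ord -sum_nat_const.
by apply: leq_sum => i _; apply: wf_hist_size; case: (inv_h i).
Qed.

Lemma hist_size_step_le c h : hist_size h <= hist_size (step_choice S c h).
Proof. by apply: leq_sum => i _; rewrite step_choiceE; case: ifP => // _; rewrite size_rcons. Qed.

Lemma hist_size_step c h : ~~ stopped S h -> hist_size h < hist_size (step_choice S c h).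
Proof.
case/forallPn=> i menu_i; rewrite /hist_size (bigD1 i) //= [X in _ < X](bigD1 i) //=.
rewrite -addSn leq_add //; first by rewrite step_choiceE (negbTE menu_i) size_rcons.
by apply: leq_sum => j _; rewrite step_choiceE; case: ifP => // _; rewrite size_rcons.
Qed.

Lemma hist_size_iter sig k h : hist_size h <= hist_size (iter k (step S sig) h).
Proof. by elim: k => //= k IH; apply: leq_trans IH (hist_size_step_le _ _). Qed.

Lemma reachable_ind (Pr : colhist -> Prop) :
  (forall h, reachable S h ->
     (forall h', reachable S h' -> hist_size h < hist_size h' -> Pr h') -> Pr h) ->
  forall h, reachable S h -> Pr h.
Proof.
move=> IH; suff: forall k h, reachable S h -> n * #|{: obj}| - hist_size h <= k -> Pr h.
  by move=> Pr_k h reach_h; apply: (Pr_k _ h reach_h (leq_subr _ _)).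
elim=> [|k IHk] h reach_h le_k; apply: IH => // h' reach_h' lt_hh'.
  have := hist_size_le (reachable_inv reach_h'); rewrite leqNgt; move: le_k.
  by rewrite leqn0 subn_eq0 => /leq_ltn_trans->.
apply: IHk => //; rewrite -ltnS (leq_trans _ le_k) // ltn_sub2l //.
exact: leq_trans lt_hh' (hist_size_le (reachable_inv reach_h')).
Qed.

Section Run.
Variable sig : 'I_n -> strategy m.
Hypothesis sig_valid : valid_strategies sig.

Lemma iter_step_stopped k h : reachable S h ->
  n * #|{: obj}| < k + hist_size h -> stopped S (iter k (step S sig) h).
Proof.
elim: k h => [|k IH] h reach_h lt_k.
  by move: (hist_size_le (reachable_inv reach_h)); rewrite leqNgt lt_k.
case: (boolP (stopped S h)) => [stopped_h|active].
  by rewrite iter_fix // /step step_choice_stopped.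
rewrite iterSr; apply: IH; first exact: reachable_step.
by rewrite (leq_trans lt_k) // addSn -addnS leq_add2l; apply: hist_size_step.
Qed.

Lemma run_stopped h : reachable S h -> stopped S (run S sig h).
Proof. by move=> reach_h; apply: iter_step_stopped; rewrite // ltnS leq_addr. Qed.

Lemma iter_step_stopped_add k l h : stopped S (iter k (step S sig) h) ->
  iter (l + k) (step S sig) h = iter k (step S sig) h.
Proof. by move=> stopped_k; rewrite iterD iter_fix // /step step_choice_stopped. Qed.

Lemma run_step h : reachable S h -> run S sig (step S sig h) = run S sig h.
Proof.
move=> reach_h; rewrite /run -iterSr -add1n.
exact/iter_step_stopped_add/run_stopped.
Qed.

Lemma run_reachable h : reachable S h -> reachable S (run S sig h).
Proof. exact: reachable_iter. Qed.

End Run.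

Lemma run_of_stopped sig h : stopped S h -> run S sig h = h.
Proof. by move=> stopped_h; rewrite /run iter_fix // /step step_choice_stopped. Qed.

Definition straightforward_play (Q : profile) : 'I_n -> strategy m :=
  fun i => straightforward (Q i).

Lemma straightforward_play_valid Q : valid_strategies (straightforward_play Q).
Proof. by move=> i; apply: straightforward_valid. Qed.

Lemma reachable_on_straightforward_path h (Q : profile) : reachable S h -> consistentP Q h ->
  exists k, h = iter k (step S (straightforward_play Q)) (hempty n m).
Proof.
elim=> [|h' c _ IH _ c_in] Q_cons; first by exists 0.
case: (IH (consistentP_step Q_cons)) => k def_h'; exists k.+1; rewrite iterS -def_h'.
apply/ffunP=> i; rewrite !ffunE; case: ifP => // /negbT menu_i; congr (rcons _ (_, _)).
move/forallP: Q_cons => /(_ i); rewrite step_choiceE (negbTE menu_i) consistent_rcons.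
by case/andP=> /forall_inP c_best _; symmetry; apply: straightforward_best => //; apply: c_in.
Qed.

Lemma active_idle_has_chosen h j : ~~ stopped S h -> S h j == set0 -> h j != [::].
Proof.
case/forallPn=> i menu_i; case: (nonempty_menuE menu_i) => S_muH phiH_n1 _.
rewrite /canonical_menu (negbTE phiH_n1) /=; case: (h j) => [|//] /=.
rewrite /last_choice /= => /eqP muH_0; move: menu_i; rewrite S_muH /muH.
by rewrite imset_eq0 -(imset_eq0 (fun mu : alloc n m => mu j)) -/(muH phi h j) muH_0 eqxx.
Qed.

Lemma consistent_run_straightforward sig h j (P Q : pref) :
  valid_strategies sig -> sig j =2 straightforward P -> reachable S h ->
  consistent Q (h j) -> agree_outside (choices (h j)) Q P ->
  consistent Q (run S sig h j).
Proof.
move=> sig_valid sig_j reach_h Q_cons Q_agree; rewrite /run.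
have inv k : consistent Q (iter k (step S sig) h j) /\
             {subset choices (h j) <= choices (iter k (step S sig) h j)}.
  elim: k => [|k [IHcons IHsub]]; first by split.
  rewrite iterS stepE; case: ifP => [//|/negbT menu_j].
  set hk := iter k (step S sig) h.
  have inv_k := reachable_inv (reachable_iter sig_valid k reach_h).
  rewrite consistent_rcons IHcons andbT choices_rcons; split; last first.
    by move=> o /IHsub o_in; rewrite mem_rcons in_cons o_in orbT.
  have fresh o : o \in S hk j -> o \notin choices (h j).
    by move/(menu_not_chosen inv_k); apply: contra; apply: IHsub.
  rewrite sig_j; have [s_in s_best] := straightforwardP P (hk j) menu_j.
  by apply/forall_inP=> o o_in /=; rewrite Q_agree ?fresh //; apply: s_best.
exact: (inv _).1.
Qed.

Lemma consistentP_iter (P : profile) sig h k :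
  consistentP P (iter k (step S sig) h) -> consistentP P h.
Proof. by elim: k => //= k IH /consistentP_step /IH. Qed.

Lemma choices_first_step_consistentP (P : profile) c h : reachable S h ->
  (forall i, S h i != set0 -> c i \in S h i) ->
  consistentP [ffun i => choices_first (P i) (step_choice S c h i)] h.
Proof.
move=> reach_h c_in; apply: (@consistentP_step _ c); apply/forallP=> i; rewrite ffunE.
by apply: choices_first_consistent; case: (hist_inv_step (reachable_inv reach_h) c_in i).
Qed.

End CanonicalMechanism.

Section Profiles.
Variables n m : nat.
Local Notation profile := (profile n m).

Lemma updE (P : profile) j Pa i : upd P j Pa i = if i == j then Pa else P i.
Proof. by rewrite ffunE. Qed.

Lemma upd_id (P : profile) j : upd P j (P j) = P.
Proof. by apply/ffunP=> i; rewrite updE; case: eqP => // ->. Qed.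

Lemma upd_upd (P : profile) j Pa Pa' : upd (upd P j Pa) j Pa' = upd P j Pa'.
Proof. by apply/ffunP=> i; rewrite !updE; case: eqP. Qed.

Lemma consistentP_upd (X : profile) j Pa (hA : colhist n m) :
  consistentP X hA -> consistent Pa (hA j) -> consistentP (upd X j Pa) hA.
Proof.
move=> X_cons Pa_cons; apply/forallP=> i; rewrite updE.
by case: eqP => [->|_]; last exact: (forallP X_cons).
Qed.

Lemma upd_all_ind (Pr : profile -> Prop) (X F : profile) :
  Pr X -> (forall Y j, Pr Y -> Pr (upd Y j (F j))) -> Pr F.
Proof.
move=> Pr_X Pr_upd; pose mix (s : seq 'I_n) : profile := [ffun i => if i \in s then F i else X i].
have -> : F = mix (enum 'I_n) by apply/ffunP=> i; rewrite ffunE mem_enum.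
elim: (enum 'I_n) => [|j s Pr_s].
  by rewrite (_ : mix [::] = X) //; apply/ffunP=> i; rewrite ffunE.
rewrite (_ : mix (j :: s) = upd (mix s) j (F j)); first exact: Pr_upd.
by apply/ffunP=> i; rewrite updE !ffunE in_cons; case: (eqVneq i j) => [->|].
Qed.

End Profiles.

Definition deviate n m (sig : 'I_n -> strategy m) (a : 'I_n) (s' : strategy m) :
  'I_n -> strategy m := fun b => if b == a then s' else sig b.

Lemma deviate_valid n m (sig : 'I_n -> strategy m) a s' :
  valid_strategies sig -> valid_strategy s' -> valid_strategies (deviate sig a s').
Proof. by move=> sig_valid s'_valid b; rewrite /deviate; case: ifP. Qed.

Section Sequentialized.
Variables (n m : nat) (phi : rule n m).
Local Notation obj := (obj m).
Local Notation profile := (profile n m).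
Local Notation S := (canonical_menu phi).
Hypothesis phi_seq : sequentializes S phi.

(* A stopped reachable history consistent with [Q] is the straightforward play of [Q]. *)
Lemma stopped_last_choice h (Q : profile) : reachable S h -> stopped S h -> consistentP Q h ->
  forall a, odflt (null m) (last_choice (h a)) = phi Q a.
Proof.
move=> reach_h stopped_h Q_cons a.
have [k def_h] := reachable_on_straightforward_path reach_h Q_cons.
have stopped_k : stopped S (iter k (step S (straightforward_play Q)) (hempty n m)).
  by rewrite -def_h.
have run_h : run S (straightforward_play Q) (hempty n m) = h.
  rewrite def_h /run -(iter_step_stopped_add (n * #|{: obj}|).+1 stopped_k) addnC.
  rewrite iter_step_stopped_add //.
  by apply: (@run_stopped _ _ phi); [exact: straightforward_play_valid | exact: reach0].
by move: (phi_seq Q) => /ffunP /(_ a); rewrite ffunE /outcome run_h.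
Qed.

Lemma outcome_phi sig h (Q : profile) : valid_strategies sig -> reachable S h ->
  consistentP Q (run S sig h) -> forall a, outcome S sig h a = phi Q a.
Proof.
move=> sig_valid reach_h; apply: stopped_last_choice; last exact: run_stopped.
exact: run_reachable.
Qed.

End Sequentialized.

Section StraightforwardEquilibrium.
Variables (n m : nat) (phi : rule n m).
Local Notation pref := (pref m).
Local Notation profile := (profile n m).
Local Notation S := (canonical_menu phi).
Hypothesis phi_seq : sequentializes S phi.
Hypothesis phi_sp : strategy_proof phi.

Lemma choices_first_run_consistentP (P : profile) sig h a (Xa : pref) :
  valid_strategies sig -> reachable S h ->
  (forall j, j != a -> sig j =2 straightforward (P j)) -> consistent Xa (run S sig h a) ->
  consistentP (upd [ffun j => choices_first (P j) (h j)] a Xa) (run S sig h).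
Proof.
move=> sig_valid reach_h sig_j Xa_cons; apply/forallP=> j; rewrite updE.
case: eqP => [->//|/eqP j_a]; rewrite ffunE.
apply: (consistent_run_straightforward sig_valid (sig_j j j_a) reach_h).
  by apply: choices_first_consistent; case: (reachable_inv reach_h j).
exact: choices_first_agree.
Qed.

Lemma choices_first_straightforward_run (P : profile) h : reachable S h ->
  consistentP [ffun j => choices_first (P j) (h j)] (run S (straightforward_play P) h).
Proof.
move=> reach_h; apply/forallP=> j; rewrite ffunE.
apply: (consistent_run_straightforward (straightforward_play_valid P) _ reach_h) => //.
  by apply: choices_first_consistent; case: (reachable_inv reach_h j).
exact: choices_first_agree.
Qed.

Lemma in_menu_at_turn (X : profile) sig h a : reachable S h -> S h a != set0 ->
  consistentP X (run S sig h) -> phi X a \in S h a.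
Proof.
move=> reach_h menu_a /consistentP_iter X_cons.
by case: (nonempty_menuE menu_a) => -> _ _; apply: phi_in_muH.
Qed.

Lemma straightforward_no_gain_at_turn (P : profile) s' h a :
  valid_strategy s' -> reachable S h -> S h a != set0 ->
  wprefers (P a) (outcome S (straightforward_play P) h a)
                 (outcome S (deviate (straightforward_play P) a s') h a).
Proof.
move=> s'_valid reach_h menu_a.
set sig := straightforward_play P; set dev := deviate sig a s'.
have sig_valid : valid_strategies sig by apply: straightforward_play_valid.
have dev_valid : valid_strategies dev by apply: deviate_valid.
have inv_h := reachable_inv reach_h.
set Q : profile := [ffun j => choices_first (P j) (h j)].
set Xa := choices_first (P a) (run S dev h a).
have sig_cons : consistentP Q (run S sig h) by apply: choices_first_straightforward_run.
have dev_cons : consistentP (upd Q a Xa) (run S dev h).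
  apply: choices_first_run_consistentP => //.
    by move=> j /negbTE j_a; rewrite /dev /deviate j_a.
  by apply: choices_first_consistent; case: (reachable_inv (run_reachable dev_valid reach_h) a).
rewrite (outcome_phi phi_seq sig_valid reach_h sig_cons).
rewrite (outcome_phi phi_seq dev_valid reach_h dev_cons).
have := phi_sp Q a Xa; rewrite ffunE choices_first_out //; apply: (menu_not_chosen inv_h).
  exact: in_menu_at_turn sig_cons.
exact: in_menu_at_turn dev_cons.
Qed.

Lemma step_deviate_idle sig a s' h : S h a = set0 -> step S (deviate sig a s') h = step S sig h.
Proof.
move=> idle_a; apply/ffunP=> i; rewrite !stepE /deviate.
by case: (eqVneq i a) => [->|]; rewrite ?idle_a ?eqxx.
Qed.

Theorem straightforward_perfect_expost_eq :
  perfect_expost_eq S (fun (_ : 'I_n) (Pa : pref) => straightforward Pa).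
Proof.
move=> a hA reach_hA s' s'_valid P /=.
set sig := straightforward_play P; rewrite -/(deviate sig a s').
have sig_valid : valid_strategies sig by apply: straightforward_play_valid.
have dev_valid : valid_strategies (deviate sig a s') by apply: deviate_valid.
move: hA reach_hA; apply: reachable_ind => h reach_h IH.
case: (boolP (stopped S h)) => [stopped_h|active].
  by rewrite /outcome !run_of_stopped // wprefers_refl.
case: (eqVneq (S h a) set0) => [idle_a|menu_a]; last exact: straightforward_no_gain_at_turn.
rewrite /outcome -(run_step sig_valid reach_h) -(run_step dev_valid reach_h) step_deviate_idle //.
by apply: IH; [exact: reachable_step | exact: hist_size_step].
Qed.

End StraightforwardEquilibrium.

Section RuleProperties.
Variables (n m : nat) (phi : rule n m).
Local Notation obj := (obj m).
Local Notation pref := (pref m).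
Local Notation colhist := (colhist n m).
Local Notation profile := (profile n m).
Local Notation S := (canonical_menu phi).
Hypothesis phi_ir : individually_rational phi.
Hypothesis phi_rm : resource_monotonic phi.
Hypothesis phi_sp : strategy_proof phi.
Hypothesis phi_md : monotonic_discoverability phi.
Hypothesis phi_seq : sequentializes S phi.

Lemma phi_eq_of_in_L (X Y : profile) : in_L Y (phi X) X -> phi Y = phi X.
Proof.
move=> X_in_L; case: (phi_md (phi X) Y) => [//|[b Y_L]].
by move: (Y_L X X_in_L); rewrite eqxx.
Qed.

Lemma phi_upd_null_eq (X : profile) j Xj :
  phi (upd X j Xj) j = null m -> phi X j = null m -> phi (upd X j Xj) = phi X.
Proof.
move=> null_upd null_X; apply/ffunP=> i; case: (eqVneq i j) => [->|i_j].
  by rewrite null_upd null_X.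
apply: wprefers_anti; first exact: phi_rm.
have := @phi_rm j (upd X j Xj) (X j); rewrite upd_upd upd_id => /(_ null_X i i_j).
by rewrite updE (negbTE i_j).
Qed.

Lemma null_in_menu h j : reachable S h -> S h j != set0 -> null m \in S h j.
Proof.
move=> reach_h menu_j; have inv_h := reachable_inv reach_h.
case: (nonempty_menuE menu_j) => S_muH _ _.
case/set0Pn: (menu_j) => o; rewrite {1}S_muH => /muH_witness[Q Q_cons _].
pose Q' := upd Q j (choices_first (null_first m) (h j)).
have Q'_cons : consistentP Q' h.
  by apply: consistentP_upd Q_cons _; apply: choices_first_consistent; case: (inv_h j).
have phi_in : phi Q' j \in S h j by rewrite S_muH; apply: phi_in_muH.
have := phi_ir Q' j; rewrite updE eqxx => /choices_first_null_acceptable[chosen|<- //].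
by move: (menu_not_chosen inv_h phi_in); rewrite chosen.
Qed.

(* The straightforward play of [X] from [h] is consistent with [X'] as well. *)
Lemma phi_eq_agree_outside h (X X' : profile) : reachable S h ->
  consistentP X h -> consistentP X' h ->
  (forall j, agree_outside (choices (h j)) (X' j) (X j)) -> phi X' = phi X.
Proof.
move=> reach_h X_cons X'_cons X'_agree.
have sig_valid := straightforward_play_valid X.
have run_cons (Y : profile) : consistentP Y h ->
    (forall j, agree_outside (choices (h j)) (Y j) (X j)) ->
    consistentP Y (run S (straightforward_play X) h).
  move=> Y_cons Y_agree; apply/forallP=> j.
  exact: consistent_run_straightforward (forallP Y_cons j) (Y_agree j).
have X_agree j : agree_outside (choices (h j)) (X j) (X j) by [].
apply/ffunP=> a; rewrite -(outcome_phi phi_seq sig_valid reach_h (run_cons _ X_cons X_agree)).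
by rewrite -(outcome_phi phi_seq sig_valid reach_h (run_cons _ X'_cons X'_agree)).
Qed.

Section AtTurn.
Variables (h : colhist) (a : 'I_n) (z : obj) (F : profile).
Hypothesis reach_h : reachable S h.
Hypothesis z_in : z \in S h a.
Hypothesis F_cons : consistentP F h.
Hypothesis F_a_best : forall o, o \notin choices (h a) -> wprefers (F a) z o.
Hypothesis F_accept : forall j, j != a ->
  forall o, wprefers (F j) o (null m) -> o \in choices (h j) \/ o = null m.
Hypothesis F_top : forall j, j != a -> S h j == set0 -> choices_on_top (F j) (h j).

Let menu_a : S h a != set0. Proof. by apply/set0Pn; exists z. Qed.

Definition turn_admissible (X : profile) : Prop :=
  [/\ consistentP X h, X a = F a & forall j, j != a -> S h j == set0 -> choices_on_top (X j) (h j)].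

Lemma phi_at_turn_in_menu (X : profile) : consistentP X h -> phi X a \in S h a.
Proof. by move=> X_cons; case: (nonempty_menuE menu_a) => -> _ _; apply: phi_in_muH. Qed.

Lemma phi_at_turn_best (X : profile) : consistentP X h ->
  wprefers (F a) (phi X a) z -> phi X a = z.
Proof.
move=> X_cons le_z; apply: (wprefers_anti le_z); apply: F_a_best.
exact: (menu_not_chosen (reachable_inv reach_h) (phi_at_turn_in_menu X_cons)).
Qed.

Lemma turn_admissible_start : exists2 X, turn_admissible X & phi X a = z.
Proof.
have inv_h := reachable_inv reach_h.
have [|Q Q_cons phi_Q] := @muH_witness _ _ phi h a z.
  by case: (nonempty_menuE menu_a) => <-.
pose Q1 : profile := [ffun i => choices_first (Q i) (h i)].
have Q1_cons : consistentP Q1 h.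
  by apply/forallP=> i; rewrite ffunE; apply: choices_first_consistent; case: (inv_h i).
have phi_Q1 : phi Q1 = phi Q.
  apply: (phi_eq_agree_outside reach_h Q_cons Q1_cons) => j.
  by rewrite ffunE; apply: choices_first_agree.
have Q2_cons : consistentP (upd Q1 a (F a)) h := consistentP_upd Q1_cons (forallP F_cons a).
have active : ~~ stopped S h by apply/forallPn; exists a.
exists (upd Q1 a (F a)); first split=> //.
- by rewrite updE eqxx.
- move=> j /negbTE j_a idle_j; rewrite updE j_a ffunE.
  apply: choices_first_on_top; first by case: (inv_h j).
  exact: (active_idle_has_chosen active idle_j).
apply: (phi_at_turn_best Q2_cons).
by have := phi_sp (upd Q1 a (F a)) a (Q1 a); rewrite upd_upd upd_id updE eqxx phi_Q1 phi_Q.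
Qed.

Lemma turn_admissible_upd X j : turn_admissible X -> turn_admissible (upd X j (F j)).
Proof.
case=> X_cons X_a X_top; split.
- exact: consistentP_upd X_cons (forallP F_cons j).
- by rewrite updE; case: eqP => [->|].
- move=> i i_a idle_i; rewrite updE; case: eqP => [i_j|_]; last exact: X_top.
  by rewrite -i_j; apply: F_top.
Qed.

(* Agent [j] switching to [F j] either keeps her (last) choice, and monotonic discoverability
   leaves [phi] unchanged, or gets [null], and resource monotonicity protects [a]. *)
Lemma phi_at_turn_upd X j : turn_admissible X -> phi X a = z -> phi (upd X j (F j)) a = z.
Proof.
move=> X_adm phi_X; case: (eqVneq j a) => [->|j_a]; first by case: X_adm => _ <- _; rewrite upd_id.
have inv_h := reachable_inv reach_h.
have [Y_cons Y_a _] := turn_admissible_upd j X_adm; case: X_adm => X_cons X_a X_top.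
set Y := upd X j (F j) in Y_cons Y_a *.
have phi_Yj := phi_in_muH phi j Y_cons.
have := phi_ir Y j; rewrite updE eqxx => /(F_accept j_a)[chosen|null_Yj]; last first.
  apply: (phi_at_turn_best Y_cons); rewrite -X_a -phi_X.
  by apply: phi_rm; rewrite // eq_sym.
have last_Yj := muH_chosen inv_h phi_Yj chosen.
have idle_j : S h j == set0.
  apply: contraT => menu_j; have phi_in : phi Y j \in S h j by case: (nonempty_menuE menu_j) => ->.
  by move: (menu_not_chosen inv_h phi_in); rewrite chosen.
have [X_last X_index] := X_top j j_a idle_j; have [F_last F_index] := F_top j_a idle_j.
have := phi_sp X j (F j); rewrite -/Y last_Yj X_last.
move=> /(muH_chosen inv_h (phi_in_muH phi j X_cons)) last_Xj.
suff /phi_eq_of_in_L-> : in_L Y (phi X) X by [].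
move=> i; rewrite updE; case: eqP => [->|_]; last by split.
rewrite last_Xj; split; first by apply/setP=> o; rewrite !inE X_last F_last.
by move=> o o'; rewrite /upper !inE !F_last => o_in o'_in; rewrite X_index ?F_index.
Qed.

End AtTurn.

Lemma phi_at_turn h a z (F : profile) : reachable S h -> z \in S h a -> consistentP F h ->
  (forall o, o \notin choices (h a) -> wprefers (F a) z o) ->
  (forall j, j != a -> forall o, wprefers (F j) o (null m) -> o \in choices (h j) \/ o = null m) ->
  (forall j, j != a -> S h j == set0 -> choices_on_top (F j) (h j)) ->
  phi F a = z.
Proof.
move=> reach_h z_in F_cons F_a_best F_accept F_top.
have [X X_adm phi_X] := turn_admissible_start reach_h z_in F_cons F_a_best.
pose Pr Y := turn_admissible h a F Y /\ phi Y a = z.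
suff [] : Pr F by [].
apply: (@upd_all_ind _ _ Pr X) => // Y j [Y_adm phi_Y]; split; first exact: turn_admissible_upd.
exact: (phi_at_turn_upd reach_h z_in F_cons F_a_best F_accept F_top j Y_adm phi_Y).
Qed.

Lemma phi_after_null_pick h j (X : profile) : reachable S h -> S h j != set0 ->
  consistentP X h -> X j = choices_first (null_first m) (rcons (h j) (S h j, null m)) ->
  phi X j = null m.
Proof.
move=> reach_h menu_j X_cons X_j.
have := phi_ir X j; rewrite X_j => /choices_first_null_acceptable[|//].
rewrite choices_rcons mem_rcons in_cons => /orP[/eqP//|chosen].
have phi_in : phi X j \in S h j by case: (nonempty_menuE menu_j) => -> _ _; apply: phi_in_muH.
by move: (menu_not_chosen (reachable_inv reach_h) phi_in); rewrite chosen.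
Qed.

Lemma phi_choices_first_step h a (P : profile) (c : 'I_n -> obj) : reachable S h ->
  c a \in S h a -> (forall j, j != a -> P j = null_first m) ->
  (forall j, j != a -> S h j != set0 -> c j = null m) ->
  phi [ffun j => choices_first (P j) (step_choice S c h j)] a = c a.
Proof.
move=> reach_h c_a P_null c_null.
have menu_a : S h a != set0 by apply/set0Pn; exists (c a).
have inv_h := reachable_inv reach_h.
have active : ~~ stopped S h by apply/forallPn; exists a.
have c_in i : S h i != set0 -> c i \in S h i.
  by case: (eqVneq i a) => [-> //|i_a] menu_i; rewrite c_null //; apply: null_in_menu.
apply: (phi_at_turn reach_h c_a).
- exact: choices_first_step_consistentP.
- move=> o o_out; rewrite ffunE step_choiceE (negbTE menu_a).
  case: (eqVneq o (c a)) => [->|o_c]; first exact: wprefers_refl.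
  apply: choices_first_in_out; rewrite choices_rcons mem_rcons in_cons ?eqxx //.
  by rewrite negb_or o_c.
- move=> j j_a o; rewrite ffunE P_null // => /choices_first_null_acceptable[|->]; last by right.
  rewrite step_choiceE; case: ifP => [_|/negbT menu_j]; first by left.
  by rewrite choices_rcons mem_rcons in_cons /= c_null // => /orP[/eqP->|]; [right|left].
- move=> j j_a idle_j; rewrite ffunE P_null // step_choiceE idle_j.
  apply: choices_first_on_top; first by case: (inv_h j).
  exact: (active_idle_has_chosen active idle_j).
Qed.

Section Uniqueness.
Variable Sig : type_strategy n m.
Hypothesis Sig_valid : forall a Pa, valid_strategy (Sig a Pa).
Hypothesis Sig_eq : perfect_expost_eq S Sig.

Definition plays_straightforward (h : colhist) : Prop := forall i (Pa : pref),
  S h i != set0 -> Sig i Pa (h i) (S h i) = straightforward Pa (h i) (S h i).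

Section Induction.
Variable h : colhist.
Hypothesis reach_h : reachable S h.
Hypothesis later_straightforward : forall h', reachable S h' ->
  hist_size h < hist_size h' -> plays_straightforward h'.
Hypothesis active : ~~ stopped S h.

Lemma outcome_after_step (P : profile) sig : valid_strategies sig ->
  (forall i, sig i = Sig i (P i) \/ sig i = straightforward (P i)) ->
  forall a, outcome S sig h a = phi [ffun i => choices_first (P i) (step S sig h i)] a.
Proof.
move=> sig_valid sig_mix a; set h1 := step S sig h.
have reach_h1 : reachable S h1 := reachable_step sig_valid reach_h.
have lt_h1 : hist_size h < hist_size h1 by apply: hist_size_step.
have sf_valid := straightforward_play_valid P.
have same_iter k : iter k (step S sig) h1 = iter k (step S (straightforward_play P)) h1.
  elim: k => //= k ->; set hk := iter k _ h1.
  have reach_k : reachable S hk := reachable_iter sf_valid k reach_h1.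
  have sf_k := later_straightforward reach_k (leq_trans lt_h1 (hist_size_iter phi _ k _)).
  apply/ffunP=> i; rewrite !stepE; case: ifP => // /negbT menu_i.
  by case: (sig_mix i) => ->; rewrite // sf_k.
have stopped_h1 : stopped S (iter (n * #|{: obj}|) (step S (straightforward_play P)) h1).
  by apply: iter_step_stopped; rewrite // -{1}[n * _]addn0 ltn_add2l (leq_ltn_trans _ lt_h1).
have run_h : run S sig h = run S (straightforward_play P) h1.
  by rewrite /run iterSr -/h1 same_iter -add1n iter_step_stopped_add.
rewrite /outcome run_h -/(outcome S (straightforward_play P) h1 a).
exact: (outcome_phi phi_seq sf_valid reach_h1 (choices_first_straightforward_run P reach_h1)).
Qed.

Let P0 : profile := [ffun => null_first m].
Let sig0 : 'I_n -> strategy m := fun i => Sig i (P0 i).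
Let T0 : profile := [ffun i => choices_first (P0 i) (step S sig0 h i)].

Lemma sig0_valid : valid_strategies sig0.
Proof. by move=> i; apply: Sig_valid. Qed.

(* Otherwise an active agent would gain by picking [null] at once. *)
Lemma phi_T0_active j : S h j != set0 -> phi T0 j = null m.
Proof.
move=> menu_j; set dev := deviate sig0 j (straightforward (null_first m)).
have dev_valid : valid_strategies dev.
  by apply: deviate_valid; [apply: sig0_valid | apply: straightforward_valid].
have dev_mix i : dev i = Sig i (P0 i) \/ dev i = straightforward (P0 i).
  by rewrite /dev /deviate; case: eqP => [->|_]; [right; rewrite ffunE | left].
have sig_mix i : sig0 i = Sig i (P0 i) \/ sig0 i = straightforward (P0 i) by left.
have /= := Sig_eq j reach_h (straightforward_valid (null_first m)) P0.
rewrite -/sig0 -/(deviate sig0 j _) -/dev.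
rewrite (outcome_after_step sig0_valid sig_mix) (outcome_after_step dev_valid dev_mix) ffunE.
suff -> : phi [ffun i => choices_first (P0 i) (step S dev h i)] j = null m.
  by rewrite null_first_acceptable => /eqP.
have dev_j : dev j (h j) (S h j) = null m.
  rewrite /dev /deviate eqxx; apply: straightforward_best; first exact: null_in_menu.
  by move=> o _; apply: null_first_top.
apply: (phi_after_null_pick reach_h menu_j).
  by apply: choices_first_step_consistentP => // i; apply: dev_valid.
by rewrite ffunE stepE (negbTE menu_j) dev_j ffunE.
Qed.

Section SinglePick.
Variable b : 'I_n.
Hypothesis menu_b : S h b != set0.

Let pick_b (i : 'I_n) : obj := if i == b then sig0 b (h b) (S h b) else null m.
Let G : profile := [ffun i => choices_first (P0 i) (step_choice S pick_b h i)].

Lemma pick_b_in i : S h i != set0 -> pick_b i \in S h i.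
Proof.
rewrite /pick_b; case: (eqVneq i b) => [->|_] menu_i; first exact (Sig_valid b (P0 b) (h b) menu_i).
exact: (null_in_menu reach_h menu_i).
Qed.

Lemma phi_pick_b : phi G = phi T0.
Proof.
have G_cons : consistentP G h := choices_first_step_consistentP P0 reach_h pick_b_in.
have T0_cons : consistentP T0 h.
  by apply: choices_first_step_consistentP => // i; apply: sig0_valid.
have G_T0 j : (j == b) || (S h j == set0) -> G j = T0 j.
  rewrite !ffunE /pick_b; case: ifP => //= _.
  by case: (eqVneq j b) => [->|].
pose Pr (Y : profile) := (forall i, Y i = T0 i \/ Y i = G i) /\ phi Y = phi T0.
suff [] : Pr G by [].
apply: (@upd_all_ind _ _ Pr T0) => [|Y j [Y_mix phi_Y]]; first by split=> // i; left.
have Y_cons : consistentP (upd Y j (G j)) h.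
  apply: consistentP_upd (forallP G_cons j); apply/forallP=> i.
  by case: (Y_mix i) => ->; [apply: (forallP T0_cons) | apply: (forallP G_cons)].
split=> [i|]; first by rewrite updE; case: eqP => [->|_]; [right | apply: Y_mix].
case: (Y_mix j) => [Y_j|<-]; last by rewrite upd_id.
case: (boolP ((j == b) || (S h j == set0))) => [/G_T0->|]; first by rewrite -Y_j upd_id.
rewrite negb_or => /andP[/negbTE j_b menu_j].
rewrite phi_upd_null_eq // ?phi_Y ?phi_T0_active //.
apply: (phi_after_null_pick reach_h menu_j Y_cons).
by rewrite updE eqxx ffunE step_choiceE (negbTE menu_j) /pick_b j_b ffunE.
Qed.

Lemma null_first_picks_null : Sig b (null_first m) (h b) (S h b) = null m.
Proof.
have P0_null j : j != b -> P0 j = null_first m by rewrite ffunE.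
have pick_null j : j != b -> S h j != set0 -> pick_b j = null m by rewrite /pick_b => /negbTE->.
have := phi_choices_first_step reach_h (pick_b_in menu_b) P0_null pick_null.
by rewrite -/G phi_pick_b phi_T0_active // /pick_b eqxx /sig0 ffunE => <-.
Qed.

End SinglePick.

End Induction.

Theorem straightforward_unique_equilibrium h : reachable S h -> plays_straightforward h.
Proof.
move: h; apply: reachable_ind => h reach_h later i p menu_i.
have active : ~~ stopped S h by apply/forallPn; exists i.
pose P : profile := [ffun j => if j == i then p else null_first m].
have P_i : P i = p by rewrite ffunE eqxx.
have P_null j : j != i -> P j = null_first m by rewrite ffunE => /negbTE->.
set sig := fun j => Sig j (P j); set dev := deviate sig i (straightforward p).
have sig_valid : valid_strategies sig by move=> j; apply: Sig_valid.
have dev_valid : valid_strategies dev by apply: deviate_valid => //; apply: straightforward_valid.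
have sig_mix j : sig j = Sig j (P j) \/ sig j = straightforward (P j) by left.
have dev_mix j : dev j = Sig j (P j) \/ dev j = straightforward (P j).
  by rewrite /dev /deviate; case: eqP => [->|_]; [right; rewrite P_i | left].
have sig_null j : j != i -> S h j != set0 -> sig j (h j) (S h j) = null m.
  by move=> j_i menu_j; rewrite /sig P_null // (null_first_picks_null reach_h later active menu_j).
have dev_null j : j != i -> S h j != set0 -> dev j (h j) (S h j) = null m.
  by move=> j_i; rewrite /dev /deviate (negbTE j_i); apply: sig_null.
have /= := Sig_eq i reach_h (straightforward_valid p) P; rewrite -/sig -/(deviate sig i _) -/dev.
rewrite (outcome_after_step reach_h later active sig_valid sig_mix).
rewrite (outcome_after_step reach_h later active dev_valid dev_mix).
rewrite (phi_choices_first_step reach_h (sig_valid i _ _ menu_i) P_null sig_null).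
rewrite (phi_choices_first_step reach_h (dev_valid i _ _ menu_i) P_null dev_null).
rewrite /dev /deviate /sig eqxx P_i => le_sf.
have [_ sf_best] := straightforwardP p (h i) menu_i.
by apply: (wprefers_anti le_sf); apply: sf_best; apply: Sig_valid.
Qed.

End Uniqueness.

End RuleProperties.

Theorem proposition2 (n m : nat) (phi : rule n m) :
  individually_rational phi ->
  resource_monotonic phi ->
  strategy_proof phi ->
  monotonic_discoverability phi ->
  sequentializes (canonical_menu phi) phi ->
  perfect_expost_eq (canonical_menu phi) (fun (_ : 'I_n) (Pa : pref m) => straightforward Pa)
  /\
  (forall Sig : type_strategy n m,
     (forall a Pa, valid_strategy (Sig a Pa)) ->
     perfect_expost_eq (canonical_menu phi) Sig ->
     forall (a : 'I_n) (Pa : pref m) (hA : colhist n m),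
       reachable (canonical_menu phi) hA ->
       canonical_menu phi hA a != set0 ->
       Sig a Pa (hA a) (canonical_menu phi hA a)
       = straightforward Pa (hA a) (canonical_menu phi hA a)).
Proof.
move=> phi_ir phi_rm phi_sp phi_md phi_seq; split.
  exact: straightforward_perfect_expost_eq.
move=> Sig Sig_valid Sig_eq a Pa hA reach_hA menu_a.
exact: straightforward_unique_equilibrium.
Qed.
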